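(* Let $G$ be a graph with no isolated vertices and let $S\subseteq V(G)$. If $N[v]\subseteq S$ for some vertex $v$, then $S$ is not a ZIr-set. Equivalently, if $S$ is a ZIr-set of $G$, then $V(G)\setminus S$ is a dominating set of $G$.
   Context: $N[v]=N(v)\cup\{v\}$ is the closed neighborhood. A dominating set is a set $D$ such that every vertex is in $D$ or adjacent to a vertex of $D$. A nonempty $F\subseteq V(G)$ is a fort if every $v\notin F$ satisfies $|N(v)\cap F|\ne1$. For $S\subseteq V(G)$, $x\in S$, a private fort of $x$ relative to $S$ is a fort $F$ with $S\cap F=\{x\}$. $S$ is a ZIr-set if every element of $S$ has a private fort relative to $S$. *)

From mathcomp Require Import all_boot.
Set Implicit Arguments. Unset Strict Implicit. Unset Printing Implicit Defensive.

Definition simple_graph (T : finType) (e : rel T) : Prop :=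
  symmetric e /\ irreflexive e.

Definition no_isolated (T : finType) (e : rel T) : Prop :=
  forall v : T, exists u : T, e v u.

Definition nbhd (T : finType) (e : rel T) (v : T) : {set T} := [set u | e v u].
Definition cnbhd (T : finType) (e : rel T) (v : T) : {set T} := v |: nbhd e v.

Definition dominating (T : finType) (e : rel T) (D : {set T}) : Prop :=
  forall v : T, v \in D \/ exists2 u, u \in D & e v u.

Definition fort (T : finType) (e : rel T) (F : {set T}) : Prop :=
  F != set0 /\ forall v : T, v \notin F -> #|nbhd e v :&: F| != 1.

Definition private_fort (T : finType) (e : rel T) (S : {set T}) (x : T) (F : {set T}) : Prop :=
  fort e F /\ S :&: F = [set x].

Definition ZIr_set (T : finType) (e : rel T) (S : {set T}) : Prop :=
  forall x, x \in S -> exists F, private_fort e S x F.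

From mathcomp Require Import all_boot.

Set Implicit Arguments.
Unset Strict Implicit.

(* If N[v] lies in S, pick a neighbour u of v; v is in S but is not u, so v lies
   outside the private fort F of u, while N(v) meets F exactly in S :&: F = {u}.
   A vertex not dominated by V \ S is exactly one with N[v] inside S. *)

Section PrivateFort.

Variables (T : finType) (e : rel T) (S F : {set T}) (u : T).
Hypothesis SF : S :&: F = [set u].

Lemma nbhdI_private_fort (v : T) :
  nbhd e v \subset S -> e v u -> nbhd e v :&: F = [set u].
Proof.
move=> nvS evu; apply/setP => w; rewrite !inE.
apply/andP/eqP => [[evw wF] | ->].
  by apply/eqP; rewrite -in_set1 -SF inE (subsetP nvS) ?inE.
by split=> //; have := set11 u; rewrite -SF inE => /andP[].
Qed.

Lemma notin_private_fort (v : T) : v \in S -> v != u -> v \notin F.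
Proof.
by move=> vS vu; apply: contra vu => vF; rewrite -in_set1 -SF inE vS.
Qed.

End PrivateFort.

Lemma cnbhd_subset_not_ZIr (T : finType) (e : rel T) (S : {set T}) (v : T) :
  irreflexive e -> no_isolated e -> cnbhd e v \subset S -> ~ ZIr_set e S.
Proof.
move=> eirr noiso vS ZS; have [u evu] := noiso v.
have nvS : nbhd e v \subset S by apply: subset_trans vS; apply: subsetUr.
have uS : u \in S by rewrite (subsetP nvS) ?inE.
have [F [[_ fortF] SF]] := ZS u uS.
have vu : v != u by apply: contraTneq evu => ->; rewrite eirr.
have vF := notin_private_fort SF (subsetP vS v (setU11 _ _)) vu.
by have := fortF v vF; rewrite (nbhdI_private_fort SF nvS evu) cards1.
Qed.

Lemma dominating_setC_cnbhd (T : finType) (e : rel T) (S : {set T}) :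
  (forall v, ~~ (cnbhd e v \subset S)) -> dominating e (~: S).
Proof.
move=> notsub v; case/subsetPn: (notsub v) => w.
rewrite /cnbhd !inE => /predU1P[-> | evw] wS.
  by left.
by right; exists w; rewrite ?inE.
Qed.

Theorem lemma2p8 (T : finType) (e : rel T) (S : {set T}) :
  simple_graph e -> no_isolated e ->
  ((exists v : T, cnbhd e v \subset S) -> ~ ZIr_set e S) /\
  (ZIr_set e S -> dominating e (~: S)).
Proof.
move=> [_ eirr] noiso; split=> [[v vS] | ZS].
  exact: cnbhd_subset_not_ZIr vS.
apply: dominating_setC_cnbhd => v; apply/negP => vS.
exact: cnbhd_subset_not_ZIr vS ZS.
Qed.
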